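(* Let $M\in\mathbb{N}$, $M\ge2$, and let $r$ be a strong solution of the BVP. Then there exists $\delta>0$ such that $z$ is monotone on $(0,\delta)$. If, in addition, $r>0$ on $(0,\delta)$, then one of the following holds identically on $(0,\delta)$: (a) $\dot z\ge0$, equivalently $0<M^2-M\sqrt{M^2-1}\le\frac{R\dot r}{r}\le M^2+M\sqrt{M^2-1}$; (b) $\dot z\le0$ and $\left(\frac{r}{R}\right)^{\cdot}>0$; (c) $\dot z\le0$ and $\left(\frac{r}{R}\right)^{\cdot}<0$.
   Context: Fix constants $\gamma>0$, $s_0\ge0$, $\kappa\ge-\gamma s_0$ and a convex function $\rho\in C^\infty(\mathbb{R})$ with $\rho(s)=0$ for $s\le0$, $\rho(s)=\gamma s+\kappa$ for $s\ge s_0$, and $\rho=\rho_1$ on $[0,s_0]$ where $\rho_1$ is smooth and convex with $\rho_1(0)=0$, $\rho_1(s_0)=\gamma s_0+\kappa$. For $M\in\mathbb{N}\setminus\{0\}$ and a function $r$ on $(0,1]$ let $d(R)=\frac{Mr(R)\dot r(R)}{R}$ and $Lr(R)=\frac{M^2r}{R}-\dot r-R\ddot r$. A strong solution of the BVP is a function $r\in C([0,1])\cap C^\infty((0,1])$ with $Lr=M\rho''(d)\dot d\,r$ on $(0,1)$, $r(0)=0$ and $r(1)=1$. Let $f(s)=s\rho'(s)-\rho(s)$ and $z(R)=\frac{\dot r(R)^2}{2}+\frac{M^2r(R)^2}{2R^2}+f(d(R))$ for $R\in(0,1]$. *)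

From Stdlib Require Import Reals.
From Coquelicot Require Import Coquelicot.
Open Scope R_scope.

Definition smooth (f : R -> R) : Prop :=
  forall (n : nat) (x : R), ex_derive_n f n x.

Definition convex_fun (f : R -> R) : Prop :=
  forall x y t : R, 0 <= t <= 1 ->
    f (t * x + (1 - t) * y) <= t * f x + (1 - t) * f y.

Definition rho_hyp (gamma s0 kappa : R) (rho : R -> R) : Prop :=
  0 < gamma /\ 0 <= s0 /\ - (gamma * s0) <= kappa /\
  smooth rho /\ convex_fun rho /\
  (forall s, s <= 0 -> rho s = 0) /\
  (forall s, s0 <= s -> rho s = gamma * s + kappa) /\
  (exists rho1 : R -> R, smooth rho1 /\ convex_fun rho1 /\
     rho1 0 = 0 /\ rho1 s0 = gamma * s0 + kappa /\
     (forall s, 0 <= s <= s0 -> rho s = rho1 s)).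

(* r in C([0,1]) /\ C^infinity((0,1]).  C^infinity((0,1]) is encoded as:
   smooth on the open interval (0,1), continuous from the left at 1, and every
   derivative has a finite left limit at 1 (equivalent, by the mean value
   theorem, to having all one-sided derivatives at 1, continuous on (0,1]).
   Continuity on [0,1] additionally needs right-continuity at 0. *)
Definition regular_r (r : R -> R) : Prop :=
  (forall (n : nat) (x : R), 0 < x < 1 -> ex_derive_n r n x) /\
  filterlim r (at_right 0) (locally (r 0)) /\
  filterlim r (at_left 1) (locally (r 1)) /\
  (forall n : nat, exists l : R, filterlim (Derive_n r n) (at_left 1) (locally l)).

Definition dfun (M : nat) (r : R -> R) (x : R) : R :=
  INR M * r x * Derive r x / x.

Definition Lop (M : nat) (r : R -> R) (x : R) : R :=
  INR M ^ 2 * r x / x - Derive r x - x * Derive_n r 2 x.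

Definition strong_solution (rho : R -> R) (M : nat) (r : R -> R) : Prop :=
  regular_r r /\
  (forall x, 0 < x < 1 ->
     Lop M r x = INR M * Derive_n rho 2 (dfun M r x) * Derive (dfun M r) x * r x) /\
  r 0 = 0 /\ r 1 = 1.

Definition ffun (rho : R -> R) (s : R) : R := s * Derive rho s - rho s.

Definition zfun (rho : R -> R) (M : nat) (r : R -> R) (x : R) : R :=
  Derive r x ^ 2 / 2 + INR M ^ 2 * r x ^ 2 / (2 * x ^ 2) + ffun rho (dfun M r x).

Definition monotone_on_open (g : R -> R) (a b : R) : Prop :=
  (forall x y, a < x -> x <= y -> y < b -> g x <= g y) \/
  (forall x y, a < x -> x <= y -> y < b -> g y <= g x).

From Stdlib Require Import Reals Lra Psatz Classical.
From Coquelicot Require Import Coquelicot.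
Open Scope R_scope.

(* Along a solution, [-R^3 z' = P] with [P = R^2 r'^2 - 2 M^2 R r r' + M^2 r^2], so [z]
   is monotone wherever [P] keeps a sign.  At a root of [P] where [(r, r') <> 0] the
   equation, solved for [r''], forces [P' < 0]; hence once [P < 0] it stays negative.
   If instead [(r, r')] vanishes somewhere, Gronwall's inequality for the linear
   equation [r'' = alpha r + beta r'] gives [r = 0] to the left of that point.  Either
   way [P] has a constant sign near [0].  When [r > 0]: if [P <= 0], then [R r'/r] lies
   between the roots [M^2 +- M sqrt (M^2 - 1)] of [u^2 - 2 M^2 u + M^2]; if [P >= 0],
   then [R r' - r] has no root, so [(r/R)' = (R r' - r)/R^2] has a constant sign. *)

Lemma ex_derive_continuity_pt (f : R -> R) x : ex_derive f x -> continuity_pt f x.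
Proof. intros H. apply continuity_pt_filterlim. exact (ex_derive_continuous f x H). Qed.

Lemma continuity_pt_pos_near (f : R -> R) x : continuity_pt f x -> 0 < f x ->
  exists eta, 0 < eta /\ forall t, Rabs (t - x) < eta -> 0 < f t.
Proof.
  intros Hc Hx. destruct (proj1 (continuity_pt_locally f x) Hc (mkposreal _ Hx))
    as [eta Heta].
  exists eta. split; [apply cond_pos|]. intros t Ht.
  assert (Hft := Heta t Ht). apply Rabs_def2 in Hft. simpl in Hft. lra.
Qed.

Lemma continuity_pt_neg_near (f : R -> R) x : continuity_pt f x -> f x < 0 ->
  exists eta, 0 < eta /\ forall t, Rabs (t - x) < eta -> f t < 0.
Proof.
  intros Hc Hx.
  destruct (continuity_pt_pos_near (fun t => - f t) x) as [eta [Heta H]];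
    [now apply continuity_pt_opp | lra |].
  exists eta. split; [exact Heta|]. intros t Ht. specialize (H t Ht). lra.
Qed.

Lemma is_derive_neg_root_pos_left (f : R -> R) x l :
  is_derive f x l -> l < 0 -> f x = 0 ->
  exists eta, 0 < eta /\ forall t, x - eta < t < x -> 0 < f t.
Proof.
  intros Hd Hl H0. apply is_derive_Reals in Hd.
  destruct (Hd (- l / 2)) as [eta H]; [lra|].
  exists eta. split; [apply cond_pos|]. intros t Ht.
  specialize (H (t - x)). replace (x + (t - x)) with t in H by ring.
  rewrite H0, Rminus_0_r in H.
  assert (Hq : Rabs (f t / (t - x) - l) < - l / 2).
  { apply H; [lra|]. rewrite Rabs_left; lra. }
  apply Rabs_def2 in Hq.
  assert (Hft : f t = f t / (t - x) * (t - x)) by (field; lra).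
  nra.
Qed.

Lemma nondecreasing_of_derive_nonneg (f f' : R -> R) a b :
  a <= b -> (forall c, a <= c <= b -> is_derive f c (f' c)) ->
  (forall c, a <= c <= b -> 0 <= f' c) -> f a <= f b.
Proof.
  intros Hab Hd Hp. destruct (Req_dec a b) as [<-|Hne]; [lra|].
  destruct (MVT_cor2 f f' a b) as [c [Hc1 Hc2]]; [lra| |].
  - intros c Hc. apply is_derive_Reals. now apply Hd.
  - assert (0 <= f' c) by (apply Hp; lra). nra.
Qed.

Lemma monotone_on_open_of_derive_sign (f f' : R -> R) a b :
  (forall c, a < c < b -> is_derive f c (f' c)) ->
  (forall c, a < c < b -> 0 <= f' c) \/ (forall c, a < c < b -> f' c <= 0) ->
  monotone_on_open f a b.
Proof.
  intros Hd [Hp|Hn]; [left|right]; intros x y Hx Hxy Hy.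
  - apply (nondecreasing_of_derive_nonneg f f'); [lra| |];
      intros c Hc; [apply Hd | apply Hp]; lra.
  - enough (- f x <= - f y) by lra.
    apply (nondecreasing_of_derive_nonneg (fun t => - f t) (fun t => - f' t));
      [lra| |]; intros c Hc.
    + apply (is_derive_opp f), Hd. lra.
    + enough (f' c <= 0) by lra. apply Hn. lra.
Qed.

Lemma convex_Derive_n2_nonneg (f : R -> R) :
  smooth f -> convex_fun f -> forall s, 0 <= Derive_n f 2 s.
Proof.
  intros Hs Hc s. apply Rnot_lt_le. intros Hneg.
  destruct (continuity_pt_neg_near (Derive_n f 2) s) as [eta [Heta Hnear]];
    [apply ex_derive_continuity_pt, (Hs 3%nat) | exact Hneg |].
  set (h := eta / 2).
  assert (Hd1 : forall c, derivable_pt_lim f c (Derive f c))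
    by (intros c; apply is_derive_Reals, Derive_correct, (Hs 1%nat)).
  assert (Hd2 : forall c, derivable_pt_lim (Derive f) c (Derive_n f 2 c))
    by (intros c; apply is_derive_Reals, Derive_correct, (Hs 2%nat)).
  destruct (MVT_cor2 f (Derive f) s (s + h)) as [c1 [E1 Hc1]];
    [unfold h; lra | intros; apply Hd1 |].
  destruct (MVT_cor2 f (Derive f) (s - h) s) as [c2 [E2 Hc2]];
    [unfold h; lra | intros; apply Hd1 |].
  destruct (MVT_cor2 (Derive f) (Derive_n f 2) c2 c1) as [c3 [E3 Hc3]];
    [lra | intros; apply Hd2 |].
  assert (Hc3neg : Derive_n f 2 c3 < 0) by (apply Hnear, Rabs_def1; unfold h in *; lra).
  assert (Hmid := Hc (s + h) (s - h) (1 / 2)).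
  replace (1 / 2 * (s + h) + (1 - 1 / 2) * (s - h)) with s in Hmid by field.
  assert (Hmid_le : f s <= 1 / 2 * f (s + h) + (1 - 1 / 2) * f (s - h)) by (apply Hmid; lra).
  assert (Derive f c1 - Derive f c2 < 0) by nra.
  unfold h in *. nra.
Qed.

Lemma first_root (f : R -> R) a b :
  a < b -> (forall y, a <= y <= b -> continuity_pt f y) -> f a < 0 -> 0 <= f b ->
  exists s, a < s <= b /\ f s = 0 /\ forall t, a <= t < s -> f t < 0.
Proof.
  intros Hab Hc Ha Hb.
  set (S := fun y => a <= y <= b /\ forall t, a <= t <= y -> f t < 0).
  assert (Sa : S a) by (split; [lra | intros t Ht; replace t with a by lra; exact Ha]).
  destruct (completeness S) as [s [Hub Hlub]];
    [exists b; intros y [Hy _]; lra | exists a; exact Sa |].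
  assert (Has : a <= s) by (apply Hub, Sa).
  assert (Hsb : s <= b) by (apply Hlub; intros y [Hy _]; lra).
  assert (Hbelow : forall t, a <= t < s -> f t < 0).
  { intros t Ht. apply Rnot_le_lt. intros Hft.
    enough (s <= t) by lra.
    apply Hlub. intros y [Hy Hneg]. apply Rnot_lt_le. intros Hty.
    assert (f t < 0) by (apply Hneg; lra). lra. }
  assert (Hs_nonneg : 0 <= f s).
  { apply Rnot_lt_le. intros Hfs.
    destruct (continuity_pt_neg_near f s) as [eta [Heta Hnear]]; [apply Hc; lra | exact Hfs |].
    destruct (Req_dec s b) as [Esb|Nsb]; [subst s; lra|].
    set (y := Rmin b (s + eta / 2)).
    assert (Hsy : s < y) by (apply Rmin_glb_lt; lra).
    enough (S y) by (assert (y <= s) by (apply Hub; assumption); lra).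
    split; [split; [lra | apply Rmin_l]|].
    intros t Ht. destruct (Rlt_or_le t s); [apply Hbelow; lra|].
    apply Hnear, Rabs_def1; [|lra].
    assert (y <= s + eta / 2) by apply Rmin_r. lra. }
  assert (Has' : a < s) by (destruct (Req_dec a s); [subst s; lra | lra]).
  assert (Hs_nonpos : f s <= 0).
  { apply Rnot_lt_le. intros Hfs.
    destruct (continuity_pt_pos_near f s) as [eta [Heta Hnear]]; [apply Hc; lra | exact Hfs |].
    set (t := Rmax a (s - eta / 2)).
    assert (Hat : a <= t) by apply Rmax_l.
    assert (Hts : t < s) by (apply Rmax_lub_lt; lra).
    assert (f t < 0) by (apply Hbelow; lra).
    enough (0 < f t) by lra.
    apply Hnear, Rabs_def1; [lra|]. assert (s - eta / 2 <= t) by apply Rmax_r. lra. }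
  exists s. split; [lra|]. split; [lra | exact Hbelow].
Qed.

Lemma neg_persists_of_derive_neg_at_roots (f : R -> R) a b :
  (forall y, a < y < b -> ex_derive f y) ->
  (forall y, a < y < b -> f y = 0 -> Derive f y < 0) ->
  forall x1 x2, a < x1 -> x1 <= x2 -> x2 < b -> f x1 < 0 -> f x2 < 0.
Proof.
  intros Hd Hroot x1 x2 H1 H12 H2 Hf1. apply Rnot_le_lt. intros Hf2.
  destruct (first_root f x1 x2) as [s [Hs [Hfs Hbelow]]];
    [destruct (Req_dec x1 x2); [subst; lra | lra]
    | intros y Hy; apply ex_derive_continuity_pt, Hd; lra | exact Hf1 | exact Hf2 |].
  destruct (is_derive_neg_root_pos_left f s (Derive f s)) as [eta [Heta Hleft]];
    [apply Derive_correct, Hd; lra | apply Hroot; lra | exact Hfs |].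
  set (t := Rmax x1 (s - eta / 2)).
  assert (Ht1 : x1 <= t) by apply Rmax_l.
  assert (Ht2 : s - eta / 2 <= t) by apply Rmax_r.
  assert (Hts : t < s) by (apply Rmax_lub_lt; lra).
  assert (f t < 0) by (apply Hbelow; lra).
  assert (0 < f t) by (apply Hleft; lra). lra.
Qed.

Lemma constant_sign_near_0 (f : R -> R) b : 0 < b ->
  (forall x1 x2, 0 < x1 -> x1 <= x2 -> x2 < b -> f x1 < 0 -> f x2 < 0) ->
  exists delta, 0 < delta <= b /\
    ((forall x, 0 < x < delta -> 0 <= f x) \/ (forall x, 0 < x < delta -> f x <= 0)).
Proof.
  intros Hb Hpersist.
  destruct (classic (exists x0, 0 < x0 < b /\ f x0 < 0)) as [[x0 [Hx0 Hf0]]|Hnone].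
  - destruct (classic (exists x1, 0 < x1 < x0 /\ 0 <= f x1)) as [[x1 [Hx1 Hf1]]|Hall].
    + exists x1. split; [lra|]. left. intros x Hx. apply Rnot_lt_le. intros Hfx.
      assert (f x1 < 0) by (apply (Hpersist x); lra). lra.
    + exists x0. split; [lra|]. right. intros x Hx. apply Rnot_lt_le. intros Hfx.
      apply Hall. exists x. split; [exact Hx | lra].
  - exists b. split; [lra|]. left. intros x Hx. apply Rnot_lt_le. intros Hfx.
    apply Hnone. exists x. auto.
Qed.

Lemma constant_sign_of_no_root (f : R -> R) a b :
  (forall y, a < y < b -> continuity_pt f y) -> (forall y, a < y < b -> f y <> 0) ->
  (forall y, a < y < b -> 0 < f y) \/ (forall y, a < y < b -> f y < 0).
Proof.
  intros Hc Hnz.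
  assert (Hcross : forall y1 y2, a < y1 < b -> a < y2 < b -> f y1 < 0 -> 0 < f y2 -> False).
  { intros y1 y2 Hy1 Hy2 Hf1 Hf2. destruct (Rlt_or_le y1 y2).
    - destruct (Ranalysis5.IVT_interv f y1 y2) as [c [Hc' Hfc]];
        [intros c Hc'; apply Hc; lra | lra | lra | lra |].
      apply (Hnz c); [lra | exact Hfc].
    - destruct (Ranalysis5.IVT_interv (fun t => - f t) y2 y1) as [c [Hc' Hfc]];
        [intros c Hc'; apply continuity_pt_opp, Hc; lra
        | destruct (Req_dec y1 y2); [subst; lra | lra] | lra | lra |].
      apply (Hnz c); lra. }
  destruct (classic (exists y1, a < y1 < b /\ f y1 < 0)) as [[y1 [Hy1 Hf1]]|Hnone];
    [right | left]; intros y Hy;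
    destruct (Rtotal_order (f y) 0) as [Hfy|[Hfy|Hfy]];
    try solve [assumption | exfalso; exact (Hnz y Hy Hfy)].
  - exfalso. exact (Hcross y1 y Hy1 Hy Hf1 Hfy).
  - exfalso. apply Hnone. exists y. auto.
Qed.

Lemma energy_rate_lower_bound u v al be K : 3 + al ^ 2 + be ^ 2 <= K ->
  0 <= 2 * u * v + 2 * v * (al * u + be * v) + K * (u ^ 2 + v ^ 2).
Proof.
  intros HK.
  assert (0 <= (u + v) ^ 2) by apply pow2_ge_0.
  assert (0 <= (al * u + v) ^ 2) by apply pow2_ge_0.
  assert (0 <= ((1 + be) * v) ^ 2) by apply pow2_ge_0.
  assert ((3 + al ^ 2 + be ^ 2) * (u ^ 2 + v ^ 2) <= K * (u ^ 2 + v ^ 2))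
    by (apply Rmult_le_compat_r; nra).
  nra.
Qed.

Lemma linear_ode2_zero_left (u al be : R -> R) a b x0 :
  (forall y, a < y < b -> ex_derive u y /\ ex_derive (Derive u) y) ->
  (forall y, a < y < b -> Derive_n u 2 y = al y * u y + be y * Derive u y) ->
  (forall y, a < y < b -> continuity_pt al y /\ continuity_pt be y) ->
  a < x0 < b -> u x0 = 0 -> Derive u x0 = 0 ->
  forall x, a < x <= x0 -> u x = 0 /\ Derive u x = 0.
Proof.
  intros Hd Hode Hc Hx0 Hu0 Hv0 x Hx.
  destruct (continuity_ab_maj (fun y => 3 + al y ^ 2 + be y ^ 2) x x0) as [ym [Hym _]];
    [lra | intros c Hc'; destruct (Hc c ltac:(lra));
      repeat first [apply continuity_pt_plus | apply continuity_pt_mult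
                   | apply continuity_pt_const; intros ? ?; reflexivity | assumption] |].
  set (K := 3 + al ym ^ 2 + be ym ^ 2).
  set (E := fun y => (u y ^ 2 + Derive u y ^ 2) * exp (K * y)).
  assert (HE : E x <= E x0).
  { apply (nondecreasing_of_derive_nonneg E (fun y => (2 * u y * Derive u y
      + 2 * Derive u y * Derive_n u 2 y + K * (u y ^ 2 + Derive u y ^ 2)) * exp (K * y)));
      [lra | |]; intros c Hc'; destruct (Hd c ltac:(lra)) as [H1 H2].
    - unfold E. auto_derive; [repeat split; auto|].
      change (Derive (fun y => Derive u y) c) with (Derive_n u 2 c).
      change (Derive (fun y => u y) c) with (Derive u c). ring.
    - apply Rmult_le_pos; [|apply Rlt_le, exp_pos].
      rewrite Hode by lra. apply energy_rate_lower_bound, Hym. lra. }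
  unfold E in HE. rewrite Hu0, Hv0 in HE.
  assert (exp (K * x) > 0) by apply exp_pos.
  assert (0 <= u x ^ 2) by apply pow2_ge_0. assert (0 <= Derive u x ^ 2) by apply pow2_ge_0.
  assert (u x ^ 2 + Derive u x ^ 2 <= 0) by nra.
  split; nra.
Qed.

Lemma quadratic_le0_root_bounds m u : 1 <= m ->
  u ^ 2 - 2 * m ^ 2 * u + m ^ 2 <= 0 ->
  0 < m ^ 2 - m * sqrt (m ^ 2 - 1) /\
  m ^ 2 - m * sqrt (m ^ 2 - 1) <= u /\ u <= m ^ 2 + m * sqrt (m ^ 2 - 1).
Proof.
  intros Hm Hq. set (S := sqrt (m ^ 2 - 1)).
  assert (HS0 : 0 <= S) by apply sqrt_pos.
  assert (HS2 : S * S = m ^ 2 - 1) by (apply sqrt_sqrt; nra).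
  assert (HmS : S < m) by nra.
  assert (Hsq : (u - m ^ 2) ^ 2 <= (m * S) ^ 2) by nra.
  assert (0 <= m * S) by nra.
  split; [nra|]. split; apply Rnot_lt_le; intros Hu.
  - assert ((m * S) ^ 2 < (u - m ^ 2) ^ 2) by nra. lra.
  - assert ((m * S) ^ 2 < (u - m ^ 2) ^ 2) by nra. lra.
Qed.

(* [c] stands for the value of [r''] forced by the equation (cf. [ode_solved]). *)
Lemma Pform_root_derive_neg m y a b c g :
  1 < m ^ 2 -> 0 < y -> 0 <= g -> (a <> 0 \/ b <> 0) ->
  c * (y ^ 2 * (1 + g * a ^ 2)) = m ^ 2 * a - y * b - g * a * (y * b) * (y * b - a) ->
  y ^ 2 * b ^ 2 - 2 * m ^ 2 * y * a * b + m ^ 2 * a ^ 2 = 0 ->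
  2 * y * b ^ 2 + 2 * y ^ 2 * b * c - 2 * m ^ 2 * y * b ^ 2 - 2 * m ^ 2 * y * a * c < 0.
Proof.
  intros Hm Hy Hg Hab Hc HP.
  set (w := y * b). set (T := 2 * y * b ^ 2 + 2 * y ^ 2 * b * c
    - 2 * m ^ 2 * y * b ^ 2 - 2 * m ^ 2 * y * a * c).
  assert (HT : y * T * (1 + g * a ^ 2)
     = - 2 * (m ^ 2 - 1) * (m ^ 2 * a ^ 2 + w ^ 2 + 2 * g * a ^ 2 * w ^ 2)).
  { transitivity (2 * w ^ 2 * (1 - m ^ 2) * (1 + g * a ^ 2)
        + 2 * (w - m ^ 2 * a) * (c * (y ^ 2 * (1 + g * a ^ 2)))); [unfold T, w; ring|].
    rewrite Hc. transitivity (- 2 * (m ^ 2 - 1) * (m ^ 2 * a ^ 2 + w ^ 2 + 2 * g * a ^ 2 * w ^ 2)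
      - 2 * (1 + g * a * w) * (y ^ 2 * b ^ 2 - 2 * m ^ 2 * y * a * b + m ^ 2 * a ^ 2));
      [unfold w; ring | rewrite HP; ring]. }
  assert (Hw : 0 < m ^ 2 * a ^ 2 + w ^ 2).
  { destruct Hab as [Ha|Hb].
    - assert (0 < a ^ 2) by (apply pow2_gt_0; exact Ha). nra.
    - assert (0 < w ^ 2) by (apply pow2_gt_0; unfold w; nra). nra. }
  assert (0 <= g * a ^ 2 * w ^ 2) by (apply Rmult_le_pos; [apply Rmult_le_pos|]; nra).
  assert (y * T * (1 + g * a ^ 2) < 0) by (rewrite HT; nra).
  apply Rnot_le_lt. intros HT0.
  assert (0 <= y * T * (1 + g * a ^ 2)) by (apply Rmult_le_pos; [apply Rmult_le_pos|]; nra).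
  lra.
Qed.

Definition Pform (M : nat) (r : R -> R) (x : R) : R :=
  x ^ 2 * Derive r x ^ 2 - 2 * INR M ^ 2 * x * r x * Derive r x + INR M ^ 2 * r x ^ 2.

Lemma is_derive_dfun M r x : ex_derive r x -> ex_derive (Derive r) x -> 0 < x ->
  is_derive (dfun M r) x
    (INR M * (Derive r x ^ 2 + r x * Derive_n r 2 x) / x - INR M * r x * Derive r x / x ^ 2).
Proof.
  intros H1 H2 Hx. unfold dfun. auto_derive; [repeat split; auto; lra|].
  change (Derive (fun y => r y) x) with (Derive r x).
  change (Derive (fun y => Derive r y) x) with (Derive_n r 2 x).
  field. lra.
Qed.

Lemma is_derive_zfun rho M r x : smooth rho ->
  ex_derive r x -> ex_derive (Derive r) x -> 0 < x ->
  is_derive (zfun rho M r) x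
   (Derive r x * Derive_n r 2 x + INR M ^ 2 * r x * Derive r x / x ^ 2
    - INR M ^ 2 * r x ^ 2 / x ^ 3
    + dfun M r x * Derive_n rho 2 (dfun M r x)
      * (INR M * (Derive r x ^ 2 + r x * Derive_n r 2 x) / x
         - INR M * r x * Derive r x / x ^ 2)).
Proof.
  intros Hs H1 H2 Hx.
  unfold zfun, ffun. unfold dfun at 1 2 3 4 5. auto_derive.
  - repeat split; first [assumption | exact (Hs 1%nat _) | exact (Hs 2%nat _) | lra | nra].
  - change (Derive (fun y => r y) x) with (Derive r x).
    change (Derive (fun y => Derive r y) x) with (Derive_n r 2 x).
    set (d := INR M * r x * Derive r x * / x).
    change (Derive (fun y => Derive rho y) d) with (Derive_n rho 2 d).
    change (Derive (fun y => rho y) d) with (Derive rho d).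
    replace (INR M * r x * Derive r x / x) with d by (unfold d; field; lra).
    field. lra.
Qed.

Lemma is_derive_Pform M r x : ex_derive r x -> ex_derive (Derive r) x ->
  is_derive (Pform M r) x
    (2 * x * Derive r x ^ 2 + 2 * x ^ 2 * Derive r x * Derive_n r 2 x
     - 2 * INR M ^ 2 * x * Derive r x ^ 2 - 2 * INR M ^ 2 * x * r x * Derive_n r 2 x).
Proof.
  intros H1 H2. unfold Pform. auto_derive; [repeat split; auto|].
  change (Derive (fun y => r y) x) with (Derive r x).
  change (Derive (fun y => Derive r y) x) with (Derive_n r 2 x). ring.
Qed.

Section StrongSolution.

Variables (rho : R -> R) (M : nat) (r : R -> R).
Hypothesis rho_smooth : smooth rho.
Hypothesis rho''_nonneg : forall s, 0 <= Derive_n rho 2 s.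
Hypothesis r_derivable : forall y, 0 < y < 1 -> ex_derive r y.
Hypothesis r'_derivable : forall y, 0 < y < 1 -> ex_derive (Derive r) y.
Hypothesis r_ode : forall y, 0 < y < 1 ->
  Lop M r y = INR M * Derive_n rho 2 (dfun M r y) * Derive (dfun M r) y * r y.

(* Solved for [r''], the equation reads [r'' = ode_alpha r + ode_beta r']. *)
Definition ode_g (y : R) : R := INR M ^ 2 * Derive_n rho 2 (dfun M r y) / y ^ 2.

Definition ode_alpha (y : R) : R :=
  (INR M ^ 2 - ode_g y * (y * Derive r y) * (y * Derive r y - r y))
  / (y ^ 2 * (1 + ode_g y * r y ^ 2)).

Definition ode_beta (y : R) : R := - y / (y ^ 2 * (1 + ode_g y * r y ^ 2)).

Lemma ode_g_nonneg y : 0 < y -> 0 <= ode_g y.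
Proof.
  intros Hy. unfold ode_g, Rdiv. apply Rmult_le_pos.
  - apply Rmult_le_pos; [apply pow2_ge_0 | apply rho''_nonneg].
  - apply Rlt_le, Rinv_0_lt_compat. nra.
Qed.

Lemma ode_denominator_pos y : 0 < y -> 0 < y ^ 2 * (1 + ode_g y * r y ^ 2).
Proof.
  intros Hy. assert (0 <= ode_g y * r y ^ 2)
    by (apply Rmult_le_pos; [apply ode_g_nonneg; exact Hy | apply pow2_ge_0]).
  apply Rmult_lt_0_compat; nra.
Qed.

Lemma ode_solved y : 0 < y < 1 ->
  Derive_n r 2 y * (y ^ 2 * (1 + ode_g y * r y ^ 2))
  = INR M ^ 2 * r y - y * Derive r y
    - ode_g y * r y * (y * Derive r y) * (y * Derive r y - r y).
Proof.
  intros Hy. assert (Hode := r_ode y Hy).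
  rewrite (is_derive_unique _ _ _
    (is_derive_dfun M r y (r_derivable y Hy) (r'_derivable y Hy) (proj1 Hy))) in Hode.
  unfold Lop in Hode. unfold ode_g.
  set (a := r y) in *. set (b := Derive r y) in *. set (c := Derive_n r 2 y) in *.
  set (k := Derive_n rho 2 (dfun M r y)) in *.
  transitivity (INR M ^ 2 * a - y * b - INR M ^ 2 * k / y ^ 2 * a * (y * b) * (y * b - a)
    - y * (INR M ^ 2 * a / y - b - y * c
           - INR M * k * (INR M * (b ^ 2 + a * c) / y - INR M * a * b / y ^ 2) * a));
    [field; lra | rewrite Hode; ring].
Qed.

Lemma ode_linear y : 0 < y < 1 ->
  Derive_n r 2 y = ode_alpha y * r y + ode_beta y * Derive r y.
Proof.
  intros Hy. assert (HD := ode_denominator_pos y (proj1 Hy)).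
  assert (0 <= ode_g y * r y ^ 2)
    by (apply Rmult_le_pos; [apply ode_g_nonneg; lra | apply pow2_ge_0]).
  apply (Rmult_eq_reg_r (y ^ 2 * (1 + ode_g y * r y ^ 2))); [|lra].
  rewrite ode_solved by exact Hy. unfold ode_alpha, ode_beta.
  field. lra.
Qed.

Lemma ode_coefs_continuous y : 0 < y < 1 ->
  continuity_pt ode_alpha y /\ continuity_pt ode_beta y.
Proof.
  intros Hy. assert (HD := ode_denominator_pos y (proj1 Hy)).
  assert (H1 := r_derivable y Hy). assert (H2 := r'_derivable y Hy).
  unfold ode_alpha, ode_beta, ode_g, dfun.
  split; apply ex_derive_continuity_pt; auto_derive; repeat split;
    first [assumption | exact (rho_smooth 3%nat _) | exact (Rgt_not_eq _ _ HD) | lra | nra].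
Qed.

Lemma Derive_zfun y : 0 < y < 1 -> is_derive (zfun rho M r) y (- Pform M r y / y ^ 3).
Proof.
  intros Hy. assert (Hode := r_ode y Hy).
  assert (H1 := r_derivable y Hy). assert (H2 := r'_derivable y Hy).
  rewrite (is_derive_unique _ _ _ (is_derive_dfun M r y H1 H2 (proj1 Hy))) in Hode.
  eapply is_derive_ext; [intros; reflexivity|].
  replace (- Pform M r y / y ^ 3) with
    (Derive r y * Derive_n r 2 y + INR M ^ 2 * r y * Derive r y / y ^ 2
     - INR M ^ 2 * r y ^ 2 / y ^ 3
     + dfun M r y * Derive_n rho 2 (dfun M r y)
       * (INR M * (Derive r y ^ 2 + r y * Derive_n r 2 y) / y
          - INR M * r y * Derive r y / y ^ 2));
    [exact (is_derive_zfun rho M r y rho_smooth H1 H2 (proj1 Hy))|].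
  (* [d rho''(d) d' = (r'/y) (M rho''(d) d' r) = (r'/y) L r] by the equation *)
  transitivity (Derive r y * Derive_n r 2 y + INR M ^ 2 * r y * Derive r y / y ^ 2
     - INR M ^ 2 * r y ^ 2 / y ^ 3 + Derive r y / y * Lop M r y);
    [rewrite Hode; unfold dfun; field | unfold Lop, Pform; field]; lra.
Qed.

Lemma Derive_zfun_sign y : 0 < y < 1 ->
  (0 <= Pform M r y -> Derive (zfun rho M r) y <= 0) /\
  (Pform M r y <= 0 -> 0 <= Derive (zfun rho M r) y).
Proof.
  intros Hy. rewrite (is_derive_unique _ _ _ (Derive_zfun y Hy)).
  assert (0 < / y ^ 3) by (apply Rinv_0_lt_compat, pow_lt; lra).
  unfold Rdiv. split; intros; nra.
Qed.

Hypothesis M_gt1 : 1 < INR M.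

Lemma Pform_derive_neg_at_root y : 0 < y < 1 ->
  Pform M r y = 0 -> (r y <> 0 \/ Derive r y <> 0) -> Derive (Pform M r) y < 0.
Proof.
  intros Hy HP Hnz.
  rewrite (is_derive_unique _ _ _
    (is_derive_Pform M r y (r_derivable y Hy) (r'_derivable y Hy))).
  apply (Pform_root_derive_neg _ _ _ _ _ (ode_g y)); [nra | lra
    | apply ode_g_nonneg; lra | exact Hnz | apply ode_solved; exact Hy |].
  rewrite <- HP. unfold Pform. ring.
Qed.

Lemma Pform_sign_near_0 : exists delta, 0 < delta <= 1 /\
  ((forall x, 0 < x < delta -> 0 <= Pform M r x) \/
   (forall x, 0 < x < delta -> Pform M r x <= 0)).
Proof.
  destruct (classic (exists x0, 0 < x0 < 1 /\ r x0 = 0 /\ Derive r x0 = 0))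
    as [[x0 [Hx0 [Hr0 Hr'0]]]|Hno].
  - exists x0. split; [lra|]. left. intros x Hx.
    destruct (linear_ode2_zero_left r ode_alpha ode_beta 0 1 x0
      (fun y Hy => conj (r_derivable y Hy) (r'_derivable y Hy)) ode_linear
      ode_coefs_continuous Hx0 Hr0 Hr'0 x ltac:(lra)) as [E1 E2].
    unfold Pform. rewrite E1, E2. lra.
  - apply constant_sign_near_0; [lra|].
    apply (neg_persists_of_derive_neg_at_roots _ 0 1).
    + intros y Hy. eexists. apply is_derive_Pform; auto.
    + intros y Hy HP. apply Pform_derive_neg_at_root; [exact Hy | exact HP |].
      apply not_and_or. intros [E1 E2]. apply Hno. exists y. auto.
Qed.

Lemma Pform_nonpos_ratio_bounds x : 0 < x -> 0 < r x -> Pform M r x <= 0 ->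
  0 < INR M ^ 2 - INR M * sqrt (INR M ^ 2 - 1) /\
  INR M ^ 2 - INR M * sqrt (INR M ^ 2 - 1) <= x * Derive r x / r x /\
  x * Derive r x / r x <= INR M ^ 2 + INR M * sqrt (INR M ^ 2 - 1).
Proof.
  intros Hx Hr HP. apply quadratic_le0_root_bounds; [lra|].
  set (u := x * Derive r x / r x).
  assert (Hxu : x * Derive r x = u * r x) by (unfold u; field; lra).
  assert (HPu : Pform M r x = r x ^ 2 * (u ^ 2 - 2 * INR M ^ 2 * u + INR M ^ 2)).
  { unfold Pform. transitivity ((x * Derive r x) ^ 2 - 2 * INR M ^ 2 * r x * (x * Derive r x)
      + INR M ^ 2 * r x ^ 2); [ring | rewrite Hxu; ring]. }
  assert (0 < r x ^ 2) by nra.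
  apply Rnot_lt_le. intros Hq. nra.
Qed.

Lemma Pform_nonneg_ratio_derive_sign delta : delta <= 1 ->
  (forall x, 0 < x < delta -> 0 < r x) ->
  (forall x, 0 < x < delta -> 0 <= Pform M r x) ->
  (forall x, 0 < x < delta -> 0 < Derive (fun y => r y / y) x) \/
  (forall x, 0 < x < delta -> Derive (fun y => r y / y) x < 0).
Proof.
  intros Hdelta Hpos HP.
  set (v := fun y => y * Derive r y - r y).
  assert (Hratio : forall x, 0 < x < delta -> Derive (fun y => r y / y) x = v x / x ^ 2).
  { intros x Hx. apply is_derive_unique. assert (H1 := r_derivable x ltac:(lra)).
    unfold v. auto_derive; [repeat split; auto; lra|].
    change (Derive (fun y => r y) x) with (Derive r x). field. lra. }
  (* [v = 0] would make [Pform = (1 - M^2) r^2 < 0] *)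
  assert (Hv : forall x, 0 < x < delta -> v x <> 0).
  { intros x Hx Hv0. assert (Hr := Hpos x Hx).
    assert (HPx : 0 <= (x * Derive r x) ^ 2 - 2 * INR M ^ 2 * r x * (x * Derive r x)
      + INR M ^ 2 * r x ^ 2) by (unfold Pform in HP; specialize (HP x Hx); nra).
    replace (x * Derive r x) with (r x) in HPx by (unfold v in Hv0; lra).
    assert (0 < r x ^ 2) by nra. assert (1 < INR M ^ 2) by nra. nra. }
  assert (Hsq : forall x, 0 < x -> 0 < / x ^ 2) by (intros; apply Rinv_0_lt_compat, pow_lt; lra).
  destruct (constant_sign_of_no_root v 0 delta) as [Hv_pos|Hv_neg]; [| exact Hv | left | right].
  - intros y Hy. apply ex_derive_continuity_pt. unfold v. auto_derive.
    repeat split; [apply r'_derivable | apply r_derivable]; lra.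
  - intros x Hx. rewrite Hratio by exact Hx. pose proof (Hv_pos x Hx).
    pose proof (Hsq x ltac:(lra)).
    unfold Rdiv. nra.
  - intros x Hx. rewrite Hratio by exact Hx. pose proof (Hv_neg x Hx).
    pose proof (Hsq x ltac:(lra)).
    unfold Rdiv. nra.
Qed.

End StrongSolution.

Theorem lemma2p5 (gamma s0 kappa : R) (rho : R -> R) (M : nat) (r : R -> R) :
  rho_hyp gamma s0 kappa rho ->
  (2 <= M)%nat ->
  strong_solution rho M r ->
  exists delta : R, 0 < delta <= 1 /\
    monotone_on_open (zfun rho M r) 0 delta /\
    ((forall x, 0 < x < delta -> 0 < r x) ->
      ((forall x, 0 < x < delta -> 0 <= Derive (zfun rho M r) x) /\
       (forall x, 0 < x < delta ->
          0 < INR M ^ 2 - INR M * sqrt (INR M ^ 2 - 1) /\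
          INR M ^ 2 - INR M * sqrt (INR M ^ 2 - 1) <= x * Derive r x / r x /\
          x * Derive r x / r x <= INR M ^ 2 + INR M * sqrt (INR M ^ 2 - 1)))
      \/
      ((forall x, 0 < x < delta -> Derive (zfun rho M r) x <= 0) /\
       (forall x, 0 < x < delta -> 0 < Derive (fun y => r y / y) x))
      \/
      ((forall x, 0 < x < delta -> Derive (zfun rho M r) x <= 0) /\
       (forall x, 0 < x < delta -> Derive (fun y => r y / y) x < 0))).
Proof.
  intros [_ [_ [_ [Hsmooth [Hconvex _]]]]] HM [[Hreg _] [Hode _]].
  assert (HM1 : 1 < INR M) by (apply lt_1_INR; lia).
  assert (Hrho'' := convex_Derive_n2_nonneg rho Hsmooth Hconvex).
  assert (Hr : forall y, 0 < y < 1 -> ex_derive r y) by exact (Hreg 1%nat).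
  assert (Hr' : forall y, 0 < y < 1 -> ex_derive (Derive r) y) by exact (Hreg 2%nat).
  assert (Hz := Derive_zfun_sign rho M r Hsmooth Hr Hr' Hode).
  destruct (Pform_sign_near_0 rho M r Hsmooth Hrho'' Hr Hr' Hode HM1)
    as [delta [Hdelta [HP|HP]]];
    exists delta; (split; [exact Hdelta|]); split.
  - apply (monotone_on_open_of_derive_sign _ (Derive (zfun rho M r))); [|right].
    + intros c Hc. apply Derive_correct. eexists. apply (Derive_zfun rho M r); auto; lra.
    + intros c Hc. apply Hz, HP; lra.
  - intros Hpos. right.
    destruct (Pform_nonneg_ratio_derive_sign M r Hr Hr' HM1 delta) as [Hq|Hq];
      [lra | exact Hpos | exact HP | left | right];
      (split; [intros x Hx; apply Hz, HP; lra | exact Hq]).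
  - apply (monotone_on_open_of_derive_sign _ (Derive (zfun rho M r))); [|left].
    + intros c Hc. apply Derive_correct. eexists. apply (Derive_zfun rho M r); auto; lra.
    + intros c Hc. apply Hz, HP; lra.
  - intros Hpos. left. split.
    + intros x Hx. apply Hz, HP; lra.
    + intros x Hx. apply Pform_nonpos_ratio_bounds; [exact HM1 | lra | apply Hpos, Hx | apply HP, Hx].
Qed.
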